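(* Let $A$ and $B$ be rings, $f: A\to B$ a ring homomorphism and $J$ a proper ideal of $B$ such that $J\subseteq\mathrm{nil}(B)$. Then $A\bowtie^{f}J$ is a weak Armendariz ring if and only if $A$ is a weak Armendariz ring.
   Context: All rings are associative with identity (not necessarily commutative), ring homomorphisms are unital, and ideals are two-sided. $\mathrm{nil}(R)$ denotes the set of nilpotent elements of a ring $R$. For a ring homomorphism $f:A\to B$ and an ideal $J$ of $B$, the amalgamation is the subring $A\bowtie^{f}J=\{(a,f(a)+j)\mid a\in A,\ j\in J\}$ of $A\times B$. A ring $R$ is weak Armendariz if whenever $p(x)=\sum_{i=0}^n a_ix^i$ and $q(x)=\sum_{j=0}^m b_jx^j$ in $R[x]$ satisfy $p(x)q(x)=0$, then $a_ib_j\in\mathrm{nil}(R)$ for all $i,j$. *)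

From HB Require Import structures.
From mathcomp Require Import all_boot all_order all_algebra.
Set Implicit Arguments. Unset Strict Implicit. Unset Printing Implicit Defensive.
Import GRing.Theory.
Local Open Scope ring_scope.

Definition nilpotent_elt (R : nzRingType) (x : R) : Prop := exists n : nat, x ^+ n = 0.

Definition weak_armendariz (R : nzRingType) : Prop :=
  forall p q : {poly R}, p * q = 0 ->
    forall i j : nat, nilpotent_elt (p`_i * q`_j).

Record tsideal (B : nzRingType) := Ideal {
  ideal_pred :> pred B;
  ideal0 : 0 \in ideal_pred;
  idealD : forall x y, x \in ideal_pred -> y \in ideal_pred -> x + y \in ideal_pred;
  idealN : forall x, x \in ideal_pred -> - x \in ideal_pred;
  idealMl : forall a x, x \in ideal_pred -> a * x \in ideal_pred;
  idealMr : forall x a, x \in ideal_pred -> x * a \in ideal_pred }.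

Definition proper_tsideal (B : nzRingType) (J : tsideal B) : Prop := (1 : B) \notin ideal_pred J.

Section Amalgamation.
Variables (A B : nzRingType) (f : {rmorphism A -> B}) (J : tsideal B).

(* carrier predicate of A ⋈^f J inside A × B: (a, b) with b - f a ∈ J,
   i.e. b = f a + j for some j ∈ J *)
Definition amalg_pred : pred (A * B) := fun x => x.2 - f x.1 \in ideal_pred J.

Lemma amalg_subring_closed : subring_closed amalg_pred.
Proof.
have memE x : (x \in amalg_pred) = (x.2 - f x.1 \in ideal_pred J) by [].
split.
- by rewrite memE /= rmorph1 subrr; apply: ideal0.
- move=> [a b] [c d]; rewrite !memE /= => H1 H2.
  have -> : b - d - f (a - c) = (b - f a) + - (d - f c).
    by rewrite rmorphB !opprD !opprK addrACA.
  by apply: idealD => //; apply: idealN.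
- move=> [a b] [c d]; rewrite !memE /= => H1 H2.
  have -> : b * d - f (a * c) = (b - f a) * d + f a * (d - f c).
    by rewrite rmorphM mulrBl mulrBr addrA subrK.
  by apply: idealD; [apply: idealMr | apply: idealMl].
Qed.

HB.instance Definition _ := GRing.isSubringClosed.Build (A * B)%type amalg_pred
  amalg_subring_closed.

Record amalgamation := Amalg { amalg_val :> A * B; _ : amalg_val \in amalg_pred }.

HB.instance Definition _ := [isSub for amalg_val].
HB.instance Definition _ := [Choice of amalgamation by <:].
HB.instance Definition _ := [SubChoice_isSubNzRing of amalgamation by <:].

End Amalgamation.

(* The diagonal a |-> (a, f a) embeds A into A ⋈^f J, and nilpotency is
   reflected by injective ring morphisms, so A inherits weak Armendariz.
   Conversely the first projection A ⋈^f J -> A has kernel {0} × J, which is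
   nil when J is; and weak Armendariz lifts along any ring morphism with nil
   kernel, because a_i b_j is nilpotent as soon as its image is. *)

From HB Require Import structures.
From mathcomp Require Import all_boot all_order all_algebra.
Import GRing.Theory.
Local Open Scope ring_scope.

Lemma nilpotent_eltX (R : nzRingType) (x : R) (n : nat) :
  nilpotent_elt (x ^+ n) -> nilpotent_elt x.
Proof. by case=> m xnm0; exists (n * m)%N; rewrite exprM. Qed.

Section WeakArmendarizTransfer.
Variables (R S : nzRingType) (g : {rmorphism R -> S}).

Lemma weak_armendariz_nilpotent_rmorph_coefM (p q : {poly R}) i j :
  weak_armendariz S -> p * q = 0 -> nilpotent_elt (g (p`_i * q`_j)).
Proof.
move=> wS pq0; have gpq0 : map_poly g p * map_poly g q = 0.
  by rewrite -rmorphM pq0 rmorph0.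
by have := wS _ _ gpq0 i j; rewrite !coef_map -rmorphM.
Qed.

Lemma weak_armendariz_inj :
  injective g -> weak_armendariz S -> weak_armendariz R.
Proof.
move=> g_inj wS p q pq0 i j.
have [n] := @weak_armendariz_nilpotent_rmorph_coefM p q i j wS pq0.
by rewrite -rmorphXn -(rmorph0 g) => /g_inj; exists n.
Qed.

Lemma weak_armendariz_nil_kernel :
  (forall x, g x = 0 -> nilpotent_elt x) ->
  weak_armendariz S -> weak_armendariz R.
Proof.
move=> nil_ker wS p q pq0 i j.
have [n] := @weak_armendariz_nilpotent_rmorph_coefM p q i j wS pq0.
by rewrite -rmorphXn => /nil_ker /nilpotent_eltX.
Qed.

End WeakArmendarizTransfer.

Section AmalgamationMorphisms.
Variables (A B : nzRingType) (f : {rmorphism A -> B}) (J : tsideal B).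

Lemma amalg_diag_mem (a : A) : (a, f a) \in amalg_pred f J.
Proof. by rewrite -topredE /amalg_pred /= subrr; apply: ideal0. Qed.

Definition amalg_diag (a : A) : amalgamation f J := Amalg (amalg_diag_mem a).

Lemma amalg_diag_zmod_morphism : zmod_morphism amalg_diag.
Proof. by move=> x y; apply: val_inj; rewrite /= rmorphB. Qed.

Lemma amalg_diag_monoid_morphism : monoid_morphism amalg_diag.
Proof.
split; first by apply: val_inj; rewrite /= rmorph1.
by move=> x y; apply: val_inj; rewrite /= rmorphM.
Qed.

HB.instance Definition _ :=
  GRing.isZmodMorphism.Build _ _ amalg_diag amalg_diag_zmod_morphism.
HB.instance Definition _ :=
  GRing.isMonoidMorphism.Build _ _ amalg_diag amalg_diag_monoid_morphism.

Lemma amalg_diag_inj : injective amalg_diag.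
Proof. by move=> x y /(congr1 (fun z => (val z).1)). Qed.

Definition amalg_fst : {rmorphism amalgamation f J -> A} := fst \o val.

Lemma amalg_fst_nil_kernel :
  (forall j, j \in ideal_pred J -> nilpotent_elt j) ->
  forall x, amalg_fst x = 0 -> nilpotent_elt x.
Proof.
move=> J_nil [[a b] ab_mem] /= a0.
have [m bm0] : nilpotent_elt b.
  by apply: J_nil; move: ab_mem; rewrite -topredE /amalg_pred /= a0 rmorph0 subr0.
exists m.+1; apply: val_inj; rewrite rmorphXn rmorph0 /= [LHS]surjective_pairing.
by rewrite !rmorphXn /= a0 expr0n exprSr bm0 mul0r.
Qed.

End AmalgamationMorphisms.

Theorem theorem4p1 (A B : nzRingType) (f : {rmorphism A -> B}) (J : tsideal B)
  (hJ : proper_tsideal J)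
  (hJnil : forall j : B, j \in ideal_pred J -> nilpotent_elt j) :
  weak_armendariz (amalgamation f J) <-> weak_armendariz A.
Proof.
split.
- exact/weak_armendariz_inj/amalg_diag_inj.
- exact/weak_armendariz_nil_kernel/amalg_fst_nil_kernel.
Qed.
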